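(* Let $G$ be a $4\times 4$ array with entries in $\{0,1,2,3\}$ in which each of the four values occurs exactly $4$ times, and in which every row and every column is a quad of values, i.e. is of type D (four different values), type H (two values, each occurring twice), or type S (one value occurring four times). If some column of $G$ is of type S, then every row of $G$ is of type D.
   Context: This describes the values of a single attribute in a semimagic quad square built from the 16 cards of the EvenQuads-16 deck (the 16 cards sharing one fixed value of a third attribute), where each value of the attribute appears exactly four times. *)

From mathcomp Require Import all_boot.
Set Implicit Arguments. Unset Strict Implicit. Unset Printing Implicit Defensive.

Definition grid := 'I_4 -> 'I_4 -> 'I_4.

Definition typeD (l : 'I_4 -> 'I_4) : Prop := injective l.
Definition typeS (l : 'I_4 -> 'I_4) : Prop := forall k k', l k = l k'.
Definition typeH (l : 'I_4 -> 'I_4) : Prop :=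
  exists a b : 'I_4, a <> b /\
    #|[set k | l k == a]| = 2 /\ #|[set k | l k == b]| = 2.
Definition is_quad (l : 'I_4 -> 'I_4) : Prop := typeD l \/ typeH l \/ typeS l.

Definition row (G : grid) (i : 'I_4) : 'I_4 -> 'I_4 := fun j => G i j.
Definition col (G : grid) (j : 'I_4) : 'I_4 -> 'I_4 := fun i => G i j.

Definition balanced (G : grid) : Prop :=
  forall v : 'I_4, #|[set p : 'I_4 * 'I_4 | G p.1 p.2 == v]| = 4.

From mathcomp Require Import all_boot.

(* The constant column spends all four copies of its value v, so every row
   contains v exactly once; but in a quad of type H or S every value occurs
   0, 2 or 4 times, so each row must be of type D. *)

Lemma sum_card_fibers (T : finType) (rT : eqType) (f : T -> rT) (s : seq rT) :
  uniq s -> \sum_(v <- s) #|[set x | f x == v]| = #|[set x | f x \in s]|.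
Proof.
elim: s => [_|v s IHs /= /andP [v_notin_s uniq_s]].
  rewrite big_nil; apply/esym/eqP; rewrite cards_eq0.
  by apply/eqP/setP => x; rewrite !inE.
have -> : [set x | f x \in v :: s] = [set x | f x == v] :|: [set x | f x \in s].
  by apply/setP => x; rewrite !inE.
rewrite big_cons IHs // cardsU.
have -> : [set x | f x == v] :&: [set x | f x \in s] = set0.
  apply/setP => x; rewrite !inE; apply/negbTE/andP => -[/eqP -> v_in_s].
  by rewrite v_in_s in v_notin_s.
by rewrite cards0 subn0.
Qed.

Lemma typeH_fiber_card_neq1 (l : 'I_4 -> 'I_4) (v : 'I_4) :
  typeH l -> #|[set k | l k == v]| != 1.
Proof.
move=> [a [b [/eqP neq_ab [card_a card_b]]]]; apply/eqP => card_v.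
have neq_av : a != v by apply/eqP => eq_av; move: card_a; rewrite eq_av card_v.
have neq_bv : b != v by apply/eqP => eq_bv; move: card_b; rewrite eq_bv card_v.
have uniq_abv : uniq [:: a; b; v] by rewrite /= !inE negb_or neq_ab neq_av neq_bv.
have := max_card (mem [set k | l k \in [:: a; b; v]]).
by rewrite -sum_card_fibers // !big_cons big_nil card_a card_b card_v card_ord.
Qed.

Lemma typeS_fiber_card_neq1 (l : 'I_4 -> 'I_4) (v : 'I_4) :
  typeS l -> #|[set k | l k == v]| != 1.
Proof.
move=> const_l; case: (eqVneq (l ord0) v) => [l0_v | l0_neq_v].
  have -> : [set k | l k == v] = setT.
    by apply/setP => k; rewrite !inE -l0_v (const_l k ord0) eqxx.
  by rewrite cardsT card_ord.
have -> : [set k | l k == v] = set0.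
  by apply/setP => k; rewrite !inE (const_l k ord0) (negbTE l0_neq_v).
by rewrite cards0.
Qed.

Lemma quad_fiber1_typeD (l : 'I_4 -> 'I_4) (v : 'I_4) :
  #|[set k | l k == v]| = 1 -> is_quad l -> typeD l.
Proof.
move=> card_v [//|[/typeH_fiber_card_neq1|/typeS_fiber_card_neq1]] /(_ v);
  by rewrite card_v.
Qed.

Lemma balanced_typeS_col_fiber (G : grid) (j : 'I_4) :
  balanced G -> typeS (col G j) ->
  [set p : 'I_4 * 'I_4 | G p.1 p.2 == G ord0 j] = [set (i, j) | i : 'I_4].
Proof.
move=> bal_G const_col; apply/esym/eqP; rewrite eqEcard bal_G.
rewrite card_imset ?card_ord ?andbT => [|i i' [] //].
by apply/subsetP => _ /imsetP [i _ ->]; rewrite inE /= [G i j](const_col i ord0).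
Qed.

Theorem mainTheorem2 (G : grid) :
  balanced G ->
  (forall i, is_quad (row G i)) ->
  (forall j, is_quad (col G j)) ->
  (exists j, typeS (col G j)) ->
  forall i, typeD (row G i).
Proof.
move=> bal_G quad_rows _ [j const_col] i.
apply: (@quad_fiber1_typeD _ (G ord0 j)); last exact: quad_rows.
suff -> : [set k | row G i k == G ord0 j] = [set j] by rewrite cards1.
apply/setP => k; rewrite !inE /row.
have := balanced_typeS_col_fiber G j bal_G const_col => /setP /(_ (i, k)).
rewrite inE /= => ->; apply/imsetP/eqP => [[i' _ [_ ->]] // | ->].
by exists i.
Qed.
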